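(* Let $P$ be a finite poset, let $L=\mathcal{F}(P)$, and let $K=[\hat0_K,\hat1_K]$ be an interval of $L$ (so $\hat1_K\subseteq\hat0_K$ as filters of $P$). Put $S=\hat0_K\setminus\hat1_K$, let $S_0$ be the set of maximal elements of $P\setminus\hat0_K$, and let $S_1$ be the set of minimal elements of $\hat1_K$. Then the following are equivalent: (1) $L={\uparrow\hat0_K}\cup{\downarrow\hat1_K}$, where ${\uparrow\hat0_K}=\{a\in L: a\ge \hat0_K\}$ and ${\downarrow\hat1_K}=\{a\in L: a\le\hat1_K\}$; (2) $K$ is a cutting of $L$; (3) $z<y$ in $P$ for all $z\in S_0$ and all $y\in S_1$; (4) for a new element $x_K\notin P$ there exists a partial order on $P\cup\{x_K\}$ which restricts to the order of $P$ on $P$, in which $x_K$ covers every element of $S_0$ and is covered by every element of $S_1$, and such that the set of elements of $P\cup\{x_K\}$ that are incomparable to $x_K$ is exactly $S$.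
   Context: For a finite poset $P$, a filter is an up-closed subset of $P$. $\mathcal{F}(P)$ denotes the set of all filters of $P$ ordered by reverse inclusion ($F\le G$ iff $F\supseteq G$); it is a finite distributive lattice with least element $P$ and greatest element $\emptyset$. A cutting of a finite distributive lattice $L$ is an interval (convex sublattice) $K$ of $L$ such that every maximal chain of $L$ contains at least one element of $K$. *)

From mathcomp Require Import all_boot all_order.
Set Implicit Arguments. Unset Strict Implicit. Unset Printing Implicit Defensive.
Import Order.Theory.
Local Open Scope order_scope.

Section FilterLattice.
Context {d : Order.disp_t} {T : finPOrderType d}.

Definition is_filter (A : {set T}) : Prop :=
  forall x y : T, x \in A -> x <= y -> y \in A.

(* The lattice F(P) is ordered by reverse inclusion: A <=_L B iff B \subset A.
   A chain of F(P) is a set of filters any two of which are comparable. *)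
Definition filter_chain (C : {set {set T}}) : Prop :=
  (forall A, A \in C -> is_filter A) /\
  (forall A B, A \in C -> B \in C -> A \subset B \/ B \subset A).

Definition maximal_filter_chain (C : {set {set T}}) : Prop :=
  filter_chain C /\ (forall C', filter_chain C' -> C \subset C' -> C' = C).

(* The interval K = [F0, F1] of F(P) (F0 = bottom of K, F1 = top of K,
   so F1 \subset F0): the filters A with F0 <=_L A <=_L F1. *)
Definition in_interval (F0 F1 A : {set T}) : Prop :=
  is_filter A /\ F1 \subset A /\ A \subset F0.

Definition is_cutting (F0 F1 : {set T}) : Prop :=
  forall C, maximal_filter_chain C -> exists2 A, A \in C & in_interval F0 F1 A.

Definition maxl_outside (F0 : {set T}) (z : T) : Prop :=
  z \notin F0 /\ forall w : T, w \notin F0 -> ~ (z < w).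

Definition minl_in (F1 : {set T}) (y : T) : Prop :=
  y \in F1 /\ forall w : T, w \in F1 -> ~ (w < y).

(* A partial order on option T (None plays the new element x_K). *)
Definition is_partial_order (le : rel (option T)) : Prop :=
  reflexive le /\ antisymmetric le /\ transitive le.

Definition lt_of (le : rel (option T)) (u v : option T) : Prop :=
  le u v /\ u <> v.

Definition covers (le : rel (option T)) (v u : option T) : Prop :=
  lt_of le u v /\ forall w, ~ (lt_of le u w /\ lt_of le w v).

End FilterLattice.

(** Everything hinges on the dichotomy (1).  A filter A neither contained
    in F0 nor containing F1 holds some a \notin F0 and misses some b \in F1;
    above a lies a maximal z of P \ F0 (still in A), below b a minimal y of
    F1 (not in A), so z < y fails.  Conversely the filter up(z) \cup (F1 \ y)
    violates (1) unless z < y.  Given (1), in a maximal chain C the filter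
    F0 \cap \bigcap {M \in C | M \not\subset F0} is comparable with every
    member, hence belongs to C, and it lies in K; given (2), extend {A} to a
    maximal chain and compare A with its member in K.  Finally (3) is exactly
    the transitivity of the extension with a < x_K iff a \notin F0 and
    x_K < b iff b \in F1. *)
From Stdlib Require Import Classical_Prop.
From mathcomp Require Import all_boot all_order.
Import Order.Theory.
Local Open Scope order_scope.

Section MaximalElements.
Context {d : Order.disp_t} {T : finPOrderType d}.

Lemma ltn_card_downset (z w : T) :
  z < w -> #|[set v | v <= z]| < #|[set v | v <= w]|.
Proof.
move=> ltzw; apply: proper_card; apply/properP; split.
  by apply/subsetP => v; rewrite !inE => levz; exact: le_trans levz (ltW ltzw).
by exists w; rewrite !inE ?lexx // lt_geF.
Qed.

Lemma exists_maximal_above (P : pred T) (a : T) :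
  P a -> exists2 z, a <= z & P z /\ forall w, P w -> ~ z < w.
Proof.
move=> Pa; have Qa : [pred w | P w && (a <= w)] a by rewrite /= Pa lexx.
case: (arg_maxnP (fun w => #|[set v | v <= w]|) Qa) => z /andP[Pz az] zmax.
exists z => //; split => // w Pw ltzw.
have := zmax w; rewrite /= Pw (le_trans az (ltW ltzw)) => /(_ isT).
by rewrite leqNgt => /negP; apply; exact: ltn_card_downset.
Qed.

End MaximalElements.

Lemma exists_minimal_below {d : Order.disp_t} {T : finPOrderType d}
    (P : pred T) (b : T) :
  P b -> exists2 y, y <= b & P y /\ forall w, P w -> ~ w < y.
Proof. exact: (@exists_maximal_above _ T^d). Qed.

Section FilterChains.
Context {d : Order.disp_t} {T : finPOrderType d}.

Lemma filterI (A B : {set T}) :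
  is_filter A -> is_filter B -> is_filter (A :&: B).
Proof.
move=> fA fB x y; rewrite !inE => /andP[xA xB] lexy.
by rewrite (fA _ _ xA lexy) (fB _ _ xB lexy).
Qed.

Lemma filter_bigcap (I : finType) (P : pred I) (F : I -> {set T}) :
  (forall i, P i -> is_filter (F i)) -> is_filter (\bigcap_(i | P i) F i).
Proof.
move=> fF x y /bigcapP xF lexy; apply/bigcapP => i Pi.
exact: fF i Pi _ _ (xF i Pi) lexy.
Qed.

Lemma maximal_chain_mem {C : {set {set T}}} {X : {set T}} :
  maximal_filter_chain C -> is_filter X ->
  (forall M, M \in C -> M \subset X \/ X \subset M) -> X \in C.
Proof.
move=> [[filtC chainC] maxC] fX cmpX.
have chainXC : filter_chain (X |: C).
  split=> [M|M N]; first by rewrite in_setU1 => /orP[/eqP->|/filtC].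
  rewrite !in_setU1 => /orP[/eqP->|MC] /orP[/eqP->|NC].
  - by left.
  - by case: (cmpX N NC); [right|left].
  - exact: cmpX.
  - exact: chainC.
by rewrite -(maxC _ chainXC (subsetU1 X C)) setU11.
Qed.

Lemma filter_chain_maximal_ext {C : {set {set T}}} :
  filter_chain C -> exists2 C', maximal_filter_chain C' & C \subset C'.
Proof.
have [n] := ubnP #|~: C|; elim: n C => [|n IH] C // ltCn chainC.
case: (classic (maximal_filter_chain C)) => [maxC|nmaxC]; first by exists C.
have [C' [chainC' subCC' neqC'C]] :
    exists C', [/\ filter_chain C', C \subset C' & C' <> C].
  apply: NNPP => noC'; apply: nmaxC; split=> // C' chainC' subCC'.
  by apply: NNPP => neqC'C; apply: noC'; exists C'.
have ltC'C : #|~: C'| < #|~: C|.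
  by apply: proper_card; rewrite properC properEneq subCC' andbT eq_sym;
     apply/eqP.
have [C'' maxC'' subC'C''] := IH C' (leq_trans ltC'C ltCn) chainC'.
by exists C'' => //; exact: subset_trans subCC' subC'C''.
Qed.

End FilterChains.

Section Interval.
Context {d : Order.disp_t} {T : finPOrderType d} (F0 F1 : {set T}).
Hypotheses (hF0 : is_filter F0) (hF1 : is_filter F1) (hsub : F1 \subset F0).

Definition splits_filters : Prop :=
  forall A : {set T}, is_filter A -> A \subset F0 \/ F1 \subset A.

Definition maxl_lt_minl : Prop :=
  forall z y : T, maxl_outside F0 z -> minl_in F1 y -> z < y.

Definition is_extension (le : rel (option T)) : Prop :=
  is_partial_order le /\
  (forall a b : T, le (Some a) (Some b) = (a <= b)) /\
  (forall z : T, maxl_outside F0 z -> covers le None (Some z)) /\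
  (forall y : T, minl_in F1 y -> covers le (Some y) None) /\
  (forall a : T, (~ le (Some a) None /\ ~ le None (Some a)) <->
                 a \in F0 :\: F1).

Lemma maxl_outside_above {a : T} :
  a \notin F0 -> exists2 z, maxl_outside F0 z & a <= z.
Proof. by case/(exists_maximal_above (fun w => w \notin F0)) => z; exists z. Qed.

Lemma minl_in_below {b : T} : b \in F1 -> exists2 y, minl_in F1 y & y <= b.
Proof. by case/(exists_minimal_below (fun w => w \in F1)) => y; exists y. Qed.

Lemma maxl_outside_neq_minl_in {z y : T} :
  maxl_outside F0 z -> minl_in F1 y -> z != y.
Proof.
move=> [zF0 _] [yF1 _]; apply: contraNneq zF0 => ->.
exact: (subsetP hsub).
Qed.

Lemma splits_filters_of_maxl_lt_minl : maxl_lt_minl -> splits_filters.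
Proof.
move=> ltS0S1 A fA; have [|/subsetPn[a aA aF0]] := boolP (A \subset F0).
  by left.
right; have [z z_max az] := maxl_outside_above aF0.
apply/subsetP => b bF1; have [y y_min yb] := minl_in_below bF1.
exact: fA _ _ (fA _ _ (fA _ _ aA az) (ltW (ltS0S1 _ _ z_max y_min))) yb.
Qed.

Lemma maxl_lt_minl_of_splits_filters : splits_filters -> maxl_lt_minl.
Proof.
move=> dichotomy z y z_max y_min.
have [zF0 _] := z_max; have [yF1 ymin] := y_min.
pose A := [set w | (z <= w) || ((w \in F1) && (w != y))].
have fA : is_filter A.
  move=> u v; rewrite !inE => /orP[zu|/andP[uF1 neuy]] leuv; apply/orP.
    by left; exact: le_trans zu leuv.
  right; rewrite (hF1 _ _ uF1 leuv); apply: contraPneq (ymin u uF1) => eqvy.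
  by rewrite lt_neqAle neuy -eqvy.
have zA : z \in A by rewrite inE lexx.
case: (dichotomy A fA) => [/subsetP/(_ z zA)|/subsetP/(_ y yF1)].
  by rewrite (negPf zF0).
rewrite inE eqxx andbF orbF => lezy.
by rewrite lt_neqAle lezy (maxl_outside_neq_minl_in z_max y_min).
Qed.

Lemma cutting_of_splits_filters : splits_filters -> is_cutting F0 F1.
Proof.
move=> dichotomy C maxC; have [[filtC chainC] _] := maxC.
pose X := F0 :&: \bigcap_(M in C | ~~ (M \subset F0)) M.
have fX : is_filter X.
  by apply: filterI hF0 _; apply: filter_bigcap => M /andP[/filtC].
exists X; last first.
  split=> //; split; last exact: subsetIl.
  rewrite subsetI hsub; apply/bigcapsP => M /andP[MC MF0].
  by case: (dichotomy M (filtC M MC)) => // subMF0; rewrite subMF0 in MF0.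
apply: maximal_chain_mem maxC fX _ => M MC.
have [MF0|MF0] := boolP (M \subset F0); [left|right].
  rewrite subsetI MF0; apply/bigcapsP => N /andP[NC NF0].
  case: (chainC M N MC NC) => // subNM.
  by rewrite (subset_trans subNM MF0) in NF0.
by apply: subset_trans (subsetIr _ _) (bigcap_inf _ _); rewrite MC.
Qed.

Lemma splits_filters_of_cutting : is_cutting F0 F1 -> splits_filters.
Proof.
move=> cut A fA.
have chainA : filter_chain [set A].
  split=> [M|M N]; first by rewrite inE => /eqP->.
  by rewrite !inE => /eqP-> /eqP->; left.
have [C maxC /subsetP/(_ A (set11 A)) AC] := filter_chain_maximal_ext chainA.
have [B BC [_ [F1B BF0]]] := cut C maxC.
have [[_ chainC] _] := maxC.
case: (chainC A B AC BC) => [subAB|subBA].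
  by left; exact: subset_trans subAB BF0.
by right; exact: subset_trans F1B subBA.
Qed.

Lemma maxl_lt_minl_of_extension (le : rel (option T)) :
  is_extension le -> maxl_lt_minl.
Proof.
move=> [[_ [_ le_trans']] [le_Some [covN [covS _]]]] z y z_max y_min.
have [[lezN _] _] := covN z z_max; have [[leNy _] _] := covS y y_min.
rewrite lt_neqAle (maxl_outside_neq_minl_in z_max y_min) -le_Some.
exact: le_trans' lezN leNy.
Qed.

Definition ext_le : rel (option T) := fun u v =>
  match u, v with
  | Some a, Some b => a <= b
  | Some a, None => a \notin F0
  | None, Some b => b \in F1
  | None, None => true
  end.

Lemma ext_le_partial_order : maxl_lt_minl -> is_partial_order ext_le.
Proof.
move=> ltS0S1; split; [|split].
- by case=> //= a; rewrite lexx.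
- case=> [a|] [b|] //=; first by move/le_anti->.
  + by case/andP => aF0 /(subsetP hsub); rewrite (negPf aF0).
  + by case/andP => bF1 /negP; rewrite (subsetP hsub).
- case=> [b|] [a|] [c|] //=.
  + exact: le_trans.
  + by move=> leab; apply: contra => aF0; exact: hF0 _ _ aF0 leab.
  + by move=> bF1 lebc; exact: hF1 _ _ bF1 lebc.
  + move=> aF0 cF1; have [z z_max az] := maxl_outside_above aF0.
    have [y y_min yc] := minl_in_below cF1.
    exact: le_trans az (le_trans (ltW (ltS0S1 _ _ z_max y_min)) yc).
Qed.

Lemma ext_le_covers_maxl (z : T) :
  maxl_outside F0 z -> covers ext_le None (Some z).
Proof.
move=> [zF0 zmax]; split=> // [[c|]] [[/= lezc nezc] [/= cF0 _]] //.
apply: (zmax c cF0); rewrite lt_neqAle lezc andbT.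
by apply: contra_not_neq nezc => ->.
Qed.

Lemma ext_le_covered_minl (y : T) :
  minl_in F1 y -> covers ext_le (Some y) None.
Proof.
move=> [yF1 ymin]; split=> // [[c|]] [[/= cF1 _] [/= lecy necy]] //.
apply: (ymin c cF1); rewrite lt_neqAle lecy andbT.
by apply: contra_not_neq necy => ->.
Qed.

Lemma ext_le_incomparable (a : T) :
  (~ ext_le (Some a) None /\ ~ ext_le None (Some a)) <-> a \in F0 :\: F1.
Proof.
by rewrite /= in_setD; case: (a \in F1); case: (a \in F0); split=> //= [[]].
Qed.

Lemma extension_of_maxl_lt_minl : maxl_lt_minl -> exists le, is_extension le.
Proof.
move=> ltS0S1; exists ext_le; split; first exact: ext_le_partial_order.
split=> //; split; first exact: ext_le_covers_maxl.
by split; [exact: ext_le_covered_minl | exact: ext_le_incomparable].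
Qed.

End Interval.

Theorem theorem2 (d : Order.disp_t) (T : finPOrderType d) (F0 F1 : {set T})
  (hF0 : is_filter F0) (hF1 : is_filter F1) (hsub : F1 \subset F0) :
  [<->
    (* (1) L = up(F0) \cup down(F1) *)
    (forall A : {set T}, is_filter A -> A \subset F0 \/ F1 \subset A);
    (* (2) K is a cutting of L *)
    is_cutting F0 F1;
    (* (3) z < y for all z in S0, y in S1 *)
    (forall z y : T, maxl_outside F0 z -> minl_in F1 y -> z < y);
    (* (4) extension by x_K *)
    (exists le : rel (option T),
        is_partial_order le /\
        (forall a b : T, le (Some a) (Some b) = (a <= b)) /\
        (forall z : T, maxl_outside F0 z -> covers le None (Some z)) /\
        (forall y : T, minl_in F1 y -> covers le (Some y) None) /\
        (forall a : T, (~ le (Some a) None /\ ~ le None (Some a)) <->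
                       a \in F0 :\: F1))].
Proof.
tfae.
- exact: cutting_of_splits_filters.
- move=> cut; apply: maxl_lt_minl_of_splits_filters => //.
  exact: splits_filters_of_cutting.
- exact: extension_of_maxl_lt_minl.
- case=> le ext; apply: splits_filters_of_maxl_lt_minl.
  exact: maxl_lt_minl_of_extension ext.
Qed.
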